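(* For each integer $0\le k\le4$ and every $x\in\mathbb{R}$, \[ \big|H^{(k)}(x)-\big(i^ke^{ix}\alpha(x)+(2i)^ke^{2ix}\beta(x)\big)\big|\le\frac18 \qquad\text{and}\qquad |H^{(k)}(x)|\le 2^k+2. \]
   Context: Rudin–Shapiro polynomials: $P_0(z)=Q_0(z)=1$ and for $s\ge0$, $P_{s+1}(z)=P_s(z)+z^{2^s}Q_s(z)$, $Q_{s+1}(z)=P_s(z)-z^{2^s}Q_s(z)$. Let $t$ be an odd positive integer and $T:=2^{t+10}$. For $x\in\mathbb{R}$ define $\alpha(x):=2^{-(t+1)/2}P_t(e^{ix/T})$, $\beta(x):=2^{-(t+1)/2}Q_t(e^{ix/T})$, and $H(x):=e^{ix}\alpha(x)+e^{2ix}\beta(x)$. $H^{(k)}$ denotes the $k$-th derivative. *)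

From Stdlib Require Import Reals.
From Coquelicot Require Import Coquelicot.
Open Scope R_scope.

Definition expi (th : R) : C := (cos th, sin th).

(* Rudin-Shapiro pair (P_s(z), Q_s(z)):
   P_0 = Q_0 = 1, P_{s+1} = P_s + z^{2^s} Q_s, Q_{s+1} = P_s - z^{2^s} Q_s. *)
Fixpoint RS (s : nat) (z : C) : C * C :=
  match s with
  | O => (RtoC 1, RtoC 1)
  | S s' => let (p, q) := RS s' z in
            (Cplus p (Cmult (pow_n z (2 ^ s')) q),
             Cminus p (Cmult (pow_n z (2 ^ s')) q))
  end.
Definition P (s : nat) (z : C) : C := fst (RS s z).
Definition Q (s : nat) (z : C) : C := snd (RS s z).

Definition Tc (t : nat) : R := 2 ^ (t + 10).

Definition alpha (t : nat) (x : R) : C :=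
  Cmult (RtoC (Rpower 2 (- (INR t + 1) / 2))) (P t (expi (x / Tc t))).
Definition beta (t : nat) (x : R) : C :=
  Cmult (RtoC (Rpower 2 (- (INR t + 1) / 2))) (Q t (expi (x / Tc t))).

Definition H (t : nat) (x : R) : C :=
  Cplus (Cmult (expi x) (alpha t x)) (Cmult (expi (2 * x)) (beta t x)).

Definition DerC (f : R -> C) : R -> C :=
  fun x => (Derive (fun y => fst (f y)) x, Derive (fun y => snd (f y)) x).

Definition DerCn (k : nat) (f : R -> C) : R -> C := Nat.iter k DerC f.

From Stdlib Require Import Reals Lra Lia List FunctionalExtensionality.
From Coquelicot Require Import Coquelicot.
Open Scope R_scope.

(* With c = 2^{-(t+1)/2} and the Rudin-Shapiro coefficients p_j, q_j (j < 2^t),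
   H(x) = c sum_j (p_j e^{i(1 + j/T)x} + q_j e^{i(2 + j/T)x}) is a finite exponential
   sum, so H^(k) multiplies its terms by (i(1 + j/T))^k and (i(2 + j/T))^k.  The
   constant parts 1^k and 2^k of these factors give i^k e^{ix} alpha + (2i)^k e^{2ix} beta;
   by the binomial theorem the rest is a combination, with nonnegative weights, of the
   moments sum_j p_j j^m e^{ij theta} and sum_j q_j j^m e^{ij theta}.  The recursion
   P_{s+1}, Q_{s+1} = P_s +- z^{2^s} Q_s and the parallelogram law bound the euclidean
   norm of the pair of m-th moments by sqrt(2^{s+1}) (2^s)^m.  As c sqrt(2^{t+1}) = 1
   and 2^t / T = 1/1024, the rest is at most
   ((1 + 1/1024)^k - 1) + ((2 + 1/1024)^k - 2^k) <= 1/8 for k <= 4, and |alpha|^2 +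
   |beta|^2 <= 1 then gives |H^(k)| <= 2^k + 2. *)

Notation is_derive_C := (@is_derive R_AbsRing C_R_NormedModule).

Lemma expi_0 : expi 0 = 1.
Proof. unfold expi; now rewrite cos_0, sin_0. Qed.

Lemma expi_add a b : expi (a + b) = (expi a * expi b)%C.
Proof. unfold expi; rewrite cos_plus, sin_plus; apply injective_projections; simpl; ring. Qed.

Lemma Cmod_expi a : Cmod (expi a) = 1.
Proof.
  unfold expi, Cmod; simpl; rewrite Rmult_1_r, Rmult_1_r, <- sqrt_1; f_equal.
  pose proof (sin2_cos2 a) as E; unfold Rsqr in E; lra.
Qed.

Lemma pow_n_Cpow (z : C) n : pow_n z n = (z ^ n)%C.
Proof. induction n as [|n IH]; simpl; [reflexivity|]; now rewrite IH. Qed.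

Lemma Cpow_expi th n : (expi th ^ n)%C = expi (INR n * th).
Proof.
  induction n as [|n IH].
  - now rewrite Rmult_0_l, expi_0.
  - rewrite S_INR, Rmult_plus_distr_r, Rmult_1_l, Rplus_comm, expi_add; simpl; now rewrite IH.
Qed.

(** * Exponential sums *)

(* Frequencies also enter through the weight [g], on which differentiation acts. *)
Fixpoint expsum (g : R -> C) (l : list (C * R)) (x : R) : C :=
  match l with
  | nil => 0
  | (a, w) :: l' => (a * g w * expi (w * x) + expsum g l' x)%C
  end.

Lemma expsum_ext g1 g2 l x :
  (forall w, g1 w = g2 w) -> expsum g1 l x = expsum g2 l x.
Proof. intros E; induction l as [|[a w] l IH]; simpl; now rewrite ?E, ?IH. Qed.

Lemma expsum_plus g1 g2 l x :
  expsum (fun w => g1 w + g2 w)%C l x = (expsum g1 l x + expsum g2 l x)%C.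
Proof. induction l as [|[a w] l IH]; simpl; [ring|]; rewrite IH; ring. Qed.

Lemma expsum_minus g1 g2 l x :
  expsum (fun w => g1 w - g2 w)%C l x = (expsum g1 l x - expsum g2 l x)%C.
Proof. induction l as [|[a w] l IH]; simpl; [ring|]; rewrite IH; ring. Qed.

Lemma expsum_scal c g l x :
  expsum (fun w => c * g w)%C l x = (c * expsum g l x)%C.
Proof. induction l as [|[a w] l IH]; simpl; [ring|]; rewrite IH; ring. Qed.

Lemma expsum_app g l1 l2 x :
  expsum g (l1 ++ l2) x = (expsum g l1 x + expsum g l2 x)%C.
Proof. induction l1 as [|[a w] l IH]; simpl; [ring|]; rewrite IH; ring. Qed.

Definition affine_terms (s : C) (a d : R) (l : list (C * R)) : list (C * R) :=
  map (fun '(c, w) => ((s * c)%C, a + d * w)) l.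

Lemma expsum_affine g s a d l x :
  expsum g (affine_terms s a d l) x
  = (s * expi (a * x) * expsum (fun w => g (a + d * w)%R) l (d * x))%C.
Proof.
  induction l as [|[c w] l IH]; simpl; [ring|]; rewrite IH.
  replace ((a + d * w) * x) with (a * x + w * (d * x)) by ring.
  rewrite expi_add; ring.
Qed.

Lemma is_derive_C_iff (f : R -> C) x d :
  is_derive_C f x d <->
  is_derive (fun y => Re (f y)) x (Re d) /\ is_derive (fun y => Im (f y)) x (Im d).
Proof.
  unfold is_derive; split.
  - intros Hd; split.
    + apply (filterdiff_comp' f (fun t : C_R_NormedModule => fst t) x _ (fun t => fst t) Hd).
      apply filterdiff_linear, is_linear_fst.
    + apply (filterdiff_comp' f (fun t : C_R_NormedModule => snd t) x _ (fun t => snd t) Hd).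
      apply filterdiff_linear, is_linear_snd.
  - intros [H1 H2].
    apply (filterdiff_comp'_2 _ _ (fun a b => (a, b) : C) x _ _ (fun a b => (a, b) : C) H1 H2).
    apply (filterdiff_ext_lin _ (fun t => t)); [|now intros []].
    apply (filterdiff_ext (fun t => t)); [now intros []|apply filterdiff_id].
Qed.

Lemma DerC_is_derive f x d : is_derive_C f x d -> DerC f x = d.
Proof.
  intros [H1 H2]%is_derive_C_iff; unfold DerC.
  apply is_derive_unique in H1, H2.
  apply injective_projections; [exact H1|exact H2].
Qed.

Lemma is_derive_expsum g l x :
  is_derive_C (expsum g l) x (expsum (fun w => g w * (Ci * w))%C l x).
Proof.
  induction l as [|[a w] l IH]; simpl.
  - apply (is_derive_const (V := C_R_NormedModule)).
  - apply (is_derive_plus (V := C_R_NormedModule)); [|exact IH].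
    apply is_derive_C_iff; simpl; split; auto_derive; auto; ring.
Qed.

Lemma DerCn_expsum g l k :
  DerCn k (expsum g l) = expsum (fun w => g w * (Ci * w) ^ k)%C l.
Proof.
  induction k as [|k IH]; apply functional_extensionality; intro x.
  - apply expsum_ext; intro w; simpl; ring.
  - change (DerCn (S k) (expsum g l)) with (DerC (DerCn k (expsum g l))); rewrite IH.
    erewrite DerC_is_derive by apply is_derive_expsum.
    apply expsum_ext; intro w; simpl; ring.
Qed.

Lemma is_derive_DerCn_expsum g l k x :
  is_derive_C (DerCn k (expsum g l)) x (DerCn (S k) (expsum g l) x).
Proof.
  rewrite !DerCn_expsum; erewrite expsum_ext; [apply is_derive_expsum|].
  intro w; simpl; ring.
Qed.

(** * Moments and polynomial weights *)

Definition moment (m : nat) (l : list (C * R)) (th : R) : C :=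
  expsum (fun w => RtoC (w ^ m)) l th.

Lemma expsum_poly_le (c : nat -> R) (e : nat -> nat) n l th K N :
  (forall i, 0 <= c i) -> (forall m, Cmod (moment m l th) <= K * N ^ m) ->
  Cmod (expsum (fun w => RtoC (sum_f_R0 (fun i => c i * w ^ e i) n)) l th)
  <= K * sum_f_R0 (fun i => c i * N ^ e i) n.
Proof.
  intros Hc HM.
  assert (Hterm : forall i, Cmod (expsum (fun w => RtoC (c i * w ^ e i)) l th)
                            <= K * (c i * N ^ e i)).
  { intro i; rewrite (expsum_ext _ (fun w => RtoC (c i) * RtoC (w ^ e i))%C)
      by (intro; apply RtoC_mult).
    rewrite expsum_scal, Cmod_mult, Cmod_R, Rabs_pos_eq by apply Hc.
    specialize (HM (e i)); specialize (Hc i); unfold moment in HM; nra. }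
  induction n as [|n IH]; simpl; [apply Hterm|].
  rewrite (expsum_ext _ (fun w => Cplus (RtoC (sum_f_R0 (fun i => c i * w ^ e i) n))
                                         (RtoC (c (S n) * w ^ e (S n)))))
    by (intro; apply RtoC_plus).
  rewrite expsum_plus; eapply Rle_trans; [apply Cmod_triangle|].
  specialize (Hterm (S n)); lra.
Qed.

Lemma binomial_C_nonneg n i : 0 <= Binomial.C n i.
Proof.
  unfold Binomial.C; apply Rmult_le_pos; [apply pos_INR|].
  apply Rlt_le, Rinv_0_lt_compat, Rmult_lt_0_compat; apply INR_fact_lt_0.
Qed.

Lemma pow_add_sub_pow x y m :
  (x + y) ^ S m - x ^ S m
  = sum_f_R0 (fun i => Binomial.C (S m) i * x ^ i * y ^ (S m - i)) m.
Proof. rewrite binomial, tech5, C_n_n, Nat.sub_diag, pow_O; ring. Qed.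

Lemma expsum_binomial_sub_le (a b : R) (p q k : nat) l th K N :
  0 <= a -> 0 <= b -> (forall m, Cmod (moment m l th) <= K * N ^ m) ->
  Cmod (expsum (fun w => RtoC ((a * w ^ p + b * w ^ q) ^ k)) l th
        - expsum (fun w => RtoC ((a * w ^ p) ^ k)) l th)
  <= K * ((a * N ^ p + b * N ^ q) ^ k - (a * N ^ p) ^ k).
Proof.
  intros Ha Hb HM; rewrite <- expsum_minus.
  destruct k as [|k].
  - rewrite (expsum_ext _ (fun w => RtoC (sum_f_R0 (fun i => 0 * w ^ i) 0)))
      by (intro; simpl; rewrite <- RtoC_minus; f_equal; ring).
    eapply Rle_trans;
      [apply (expsum_poly_le (fun _ => 0) (fun i => i)); [intro; lra|exact HM]|].
    simpl; lra.
  - set (c i := Binomial.C (S k) i * a ^ i * b ^ (S k - i)).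
    set (e i := (p * i + q * (S k - i))%nat).
    assert (Hexp : forall w, (a * w ^ p + b * w ^ q) ^ S k - (a * w ^ p) ^ S k
                             = sum_f_R0 (fun i => c i * w ^ e i) k).
    { intro w; rewrite pow_add_sub_pow; apply sum_eq; intros i _; unfold c, e.
      rewrite pow_add, !pow_mult, !Rpow_mult_distr; ring. }
    rewrite (expsum_ext _ (fun w => RtoC (sum_f_R0 (fun i => c i * w ^ e i) k)))
      by (intro; rewrite <- RtoC_minus, Hexp; reflexivity).
    rewrite Hexp; apply expsum_poly_le; [|exact HM].
    intro i; unfold c; apply Rmult_le_pos; [apply Rmult_le_pos|];
      auto using pow_le, binomial_C_nonneg.
Qed.

Lemma expsum_affine_pow_sub_le a d k l th K N :
  0 <= a -> 0 <= d -> (forall m, Cmod (moment m l th) <= K * N ^ m) ->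
  Cmod (expsum (fun w => RtoC ((a + d * w) ^ k)) l th - RtoC (a ^ k) * moment 0 l th)
  <= K * ((a + d * N) ^ k - a ^ k).
Proof.
  intros Ha Hd HM.
  rewrite (expsum_ext _ (fun w => RtoC ((a * w ^ 0 + d * w ^ 1) ^ k)))
    by (intro; do 2 f_equal; ring).
  replace (RtoC (a ^ k) * moment 0 l th)%C
    with (expsum (fun w => RtoC ((a * w ^ 0) ^ k)) l th).
  2: { unfold moment; rewrite <- expsum_scal; apply expsum_ext; intro w.
       rewrite <- RtoC_mult; simpl; f_equal; rewrite !Rmult_1_r; reflexivity. }
  eapply Rle_trans; [apply expsum_binomial_sub_le; auto|].
  replace (a * N ^ 0 + d * N ^ 1) with (a + d * N) by ring.
  replace (a * N ^ 0) with a by ring; lra.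
Qed.

(** * Moments of the Rudin-Shapiro polynomials *)

Definition pair_norm (u v : C) : R := sqrt (Cmod u ^ 2 + Cmod v ^ 2).

Lemma Cmod_sq_sum_nonneg u v : 0 <= Cmod u ^ 2 + Cmod v ^ 2.
Proof. pose proof (pow2_ge_0 (Cmod u)); pose proof (pow2_ge_0 (Cmod v)); lra. Qed.

Lemma Cmod_le_pair_norm_l u v : Cmod u <= pair_norm u v.
Proof.
  unfold pair_norm; rewrite <- (Rabs_pos_eq (Cmod u)) at 1 by apply Cmod_ge_0.
  eapply Rle_trans; [apply Rmax_l|apply sqrt_plus_sqr].
Qed.

Lemma Cmod_le_pair_norm_r u v : Cmod v <= pair_norm u v.
Proof.
  unfold pair_norm; rewrite <- (Rabs_pos_eq (Cmod v)) at 1 by apply Cmod_ge_0.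
  eapply Rle_trans; [apply Rmax_r|apply sqrt_plus_sqr].
Qed.

Lemma pair_norm_scal c u v : pair_norm (c * u) (c * v) = Cmod c * pair_norm u v.
Proof.
  unfold pair_norm; rewrite !Cmod_mult.
  rewrite <- (sqrt_pow2 (Cmod c)) at 3 by apply Cmod_ge_0.
  rewrite <- sqrt_mult by (apply pow2_ge_0 || apply Cmod_sq_sum_nonneg).
  f_equal; ring.
Qed.

Lemma pair_norm_parallelogram u z :
  pair_norm (u + z) (u - z) = sqrt 2 * pair_norm u z.
Proof.
  unfold pair_norm; rewrite <- sqrt_mult by (lra || apply Cmod_sq_sum_nonneg).
  f_equal; rewrite !Cmod2_alt; destruct u, z; simpl; ring.
Qed.

Lemma pair_norm_le_add u v v' e :
  0 <= e -> Cmod v <= Cmod v' + e -> pair_norm u v <= pair_norm u v' + e.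
Proof.
  intros He Hv; pose proof (Cmod_le_pair_norm_r u v') as Hv'; unfold pair_norm in *.
  pose proof (Cmod_ge_0 u); pose proof (Cmod_ge_0 v); pose proof (Cmod_ge_0 v').
  pose proof (pow2_sqrt _ (Cmod_sq_sum_nonneg u v')).
  pose proof (sqrt_pos (Cmod u ^ 2 + Cmod v' ^ 2)).
  rewrite <- (sqrt_pow2 (_ + e)) by lra.
  apply sqrt_le_1_alt; nra.
Qed.

Fixpoint rs_terms (s : nat) : list (C * R) * list (C * R) :=
  match s with
  | O => ((RtoC 1, 0) :: nil, (RtoC 1, 0) :: nil)
  | S s' => let (p, q) := rs_terms s' in
            (p ++ affine_terms 1 (2 ^ s') 1 q, p ++ affine_terms (-1) (2 ^ s') 1 q)
  end.

Lemma RS_expi s th :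
  RS s (expi th) = (moment 0 (fst (rs_terms s)) th, moment 0 (snd (rs_terms s)) th).
Proof.
  unfold moment; induction s as [|s IH]; simpl.
  - rewrite Rmult_0_l, expi_0; f_equal; ring.
  - rewrite IH, pow_n_Cpow, Cpow_expi, pow_INR, INR_IZR_INZ.
    destruct (rs_terms s) as [p q]; simpl.
    rewrite !expsum_app, !expsum_affine, Rmult_1_l.
    f_equal; ring.
Qed.

Lemma moment_rs_step m p q s N th :
  moment m (p ++ affine_terms s N 1 q) th
  = (moment m p th + s * expi (N * th) * expsum (fun w => RtoC ((N + w) ^ m)) q th)%C.
Proof.
  unfold moment; rewrite expsum_app, expsum_affine, Rmult_1_l; do 2 f_equal.
  apply expsum_ext; intro w; now rewrite Rmult_1_l.
Qed.

Lemma rs_moment_bound s m th :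
  pair_norm (moment m (fst (rs_terms s)) th) (moment m (snd (rs_terms s)) th)
  <= sqrt (2 ^ S s) * (2 ^ s) ^ m.
Proof.
  revert m; induction s as [|s IH]; intro m.
  - assert (E : moment m ((RtoC 1, 0) :: nil) th = RtoC (0 ^ m))
      by (unfold moment; simpl; rewrite Rmult_0_l, expi_0; ring).
    assert (H01 : Rabs (0 ^ m) <= 1)
      by (destruct m; simpl; rewrite ?Rmult_0_l, ?Rabs_R0, ?Rabs_R1; lra).
    simpl; rewrite E, pow1, Rmult_1_r; unfold pair_norm; rewrite Cmod_R.
    apply sqrt_le_1_alt; pose proof (Rabs_pos (0 ^ m)); nra.
  - simpl rs_terms; destruct (rs_terms s) as [p q]; simpl fst in *; simpl snd in *.
    set (K := sqrt (2 ^ S s)); set (N := 2 ^ s).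
    assert (HN : 0 <= N) by (apply pow_le; lra).
    assert (HM : forall j, Cmod (moment j q th) <= K * N ^ j).
    { intro j; eapply Rle_trans; [apply Cmod_le_pair_norm_r|apply IH]. }
    assert (HV : Cmod (expsum (fun w => RtoC ((N + w) ^ m)) q th - moment m q th)
                 <= K * ((N + N) ^ m - N ^ m)).
    { rewrite (expsum_ext _ (fun w => RtoC ((1 * w ^ 1 + N * w ^ 0) ^ m)))
        by (intro w; do 2 f_equal; ring).
      unfold moment;
        rewrite (expsum_ext (fun w => RtoC (w ^ m)) (fun w => RtoC ((1 * w ^ 1) ^ m)))
        by (intro w; do 2 f_equal; ring).
      eapply Rle_trans; [apply expsum_binomial_sub_le; [lra|lra|exact HM]|].
      replace (1 * N ^ 1 + N * N ^ 0) with (N + N) by ring.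
      replace (1 * N ^ 1) with N by ring; lra. }
    (* The new moments are u +- e V with |e| = 1, and V is the m-th moment of q up to
       lower moments: the parallelogram law yields the factor sqrt 2, HV the rest. *)
    set (V := expsum (fun w => RtoC ((N + w) ^ m)) q th) in *.
    rewrite !moment_rs_step; fold N V.
    replace (moment m p th + 1 * expi (N * th) * V)%C
      with (moment m p th + expi (N * th) * V)%C by ring.
    replace (moment m p th + -1 * expi (N * th) * V)%C
      with (moment m p th - expi (N * th) * V)%C by ring.
    rewrite pair_norm_parallelogram.
    assert (HE : 0 <= K * ((N + N) ^ m - N ^ m)).
    { apply Rmult_le_pos; [apply sqrt_pos|].
      enough (N ^ m <= (N + N) ^ m) by lra; apply pow_incr; lra. }
    assert (Hu : pair_norm (moment m p th) (expi (N * th) * V) <= K * (N + N) ^ m).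
    { eapply Rle_trans; [apply (pair_norm_le_add _ _ (moment m q th) _ HE)|].
      - rewrite Cmod_mult, Cmod_expi, Rmult_1_l.
        replace V with (moment m q th + (V - moment m q th))%C at 1 by ring.
        eapply Rle_trans; [apply Cmod_triangle|lra].
      - specialize (IH m); fold K N in IH; lra. }
    replace (sqrt (2 ^ S (S s))) with (sqrt 2 * K)
      by (unfold K; rewrite <- sqrt_mult by (try apply pow_le; lra); reflexivity).
    replace (2 ^ S s) with (N + N) by (unfold N; simpl; ring).
    rewrite Rmult_assoc; apply Rmult_le_compat_l; [apply sqrt_pos|exact Hu].
Qed.

(** * The function H *)

Definition rs_normalizer (t : nat) : R := Rpower 2 (- (INR t + 1) / 2).

Lemma rs_normalizer_pos t : 0 < rs_normalizer t.
Proof. apply exp_pos. Qed.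

Lemma rs_normalizer_mul_sqrt t : rs_normalizer t * sqrt (2 ^ S t) = 1.
Proof.
  unfold rs_normalizer; rewrite <- Rpower_sqrt by (apply pow_lt; lra).
  rewrite <- (Rpower_pow (S t) 2), Rpower_mult, <- Rpower_plus, S_INR by lra.
  replace (- (INR t + 1) / 2 + (INR t + 1) * / 2) with 0 by field.
  apply Rpower_O; lra.
Qed.

Lemma alpha_moment t x :
  alpha t x = (rs_normalizer t * moment 0 (fst (rs_terms t)) (x / Tc t))%C.
Proof. unfold alpha, P; now rewrite RS_expi. Qed.

Lemma beta_moment t x :
  beta t x = (rs_normalizer t * moment 0 (snd (rs_terms t)) (x / Tc t))%C.
Proof. unfold beta, Q; now rewrite RS_expi. Qed.

Lemma pair_norm_alpha_beta_le t x : pair_norm (alpha t x) (beta t x) <= 1.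
Proof.
  rewrite alpha_moment, beta_moment, pair_norm_scal, Cmod_R.
  rewrite Rabs_pos_eq by (apply Rlt_le, rs_normalizer_pos).
  pose proof (rs_moment_bound t 0 (x / Tc t)) as B; rewrite pow_O, Rmult_1_r in B.
  rewrite <- (rs_normalizer_mul_sqrt t).
  apply Rmult_le_compat_l; [apply Rlt_le, rs_normalizer_pos|exact B].
Qed.

Definition H_terms (t : nat) : list (C * R) :=
  affine_terms (rs_normalizer t) 1 (/ Tc t) (fst (rs_terms t))
  ++ affine_terms (rs_normalizer t) 2 (/ Tc t) (snd (rs_terms t)).

Lemma H_expsum t : H t = expsum (fun w => RtoC (w ^ 0)) (H_terms t).
Proof.
  apply functional_extensionality; intro x.
  unfold H, H_terms; rewrite alpha_moment, beta_moment, expsum_app, !expsum_affine.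
  unfold moment, Rdiv; rewrite Rmult_1_l, (Rmult_comm x); simpl; ring.
Qed.

Lemma DerCn_H t k x :
  DerCn k (H t) x
  = (Ci ^ k * rs_normalizer t
     * (expi x * expsum (fun w => RtoC ((1 + / Tc t * w) ^ k)) (fst (rs_terms t)) (x / Tc t)
        + expi (2 * x)
          * expsum (fun w => RtoC ((2 + / Tc t * w) ^ k)) (snd (rs_terms t)) (x / Tc t)))%C.
Proof.
  rewrite H_expsum, DerCn_expsum; unfold H_terms; rewrite expsum_app, !expsum_affine.
  rewrite Rmult_1_l, (Rmult_comm _ x).
  rewrite (expsum_ext _ (fun w => Ci ^ k * RtoC ((1 + / Tc t * w) ^ k))%C (fst _)),
          (expsum_ext _ (fun w => Ci ^ k * RtoC ((2 + / Tc t * w) ^ k))%C (snd _)),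
          !expsum_scal
    by (intro; rewrite Cpow_mult_l, !RtoC_pow; simpl; ring).
  unfold Rdiv; ring.
Qed.

Definition H_approx (t k : nat) (x : R) : C :=
  (Ci ^ k * (expi x * alpha t x) + (2 * Ci) ^ k * (expi (2 * x) * beta t x))%C.

Lemma Cmod_H_approx_le t k x : Cmod (H_approx t k x) <= 1 + 2 ^ k.
Proof.
  pose proof (Cmod_le_pair_norm_l (alpha t x) (beta t x)).
  pose proof (Cmod_le_pair_norm_r (alpha t x) (beta t x)).
  pose proof (pair_norm_alpha_beta_le t x).
  assert (H2 : 0 <= 2 ^ k) by (apply pow_le; lra).
  unfold H_approx; eapply Rle_trans; [apply Cmod_triangle|].
  rewrite !Cmod_mult, !Cmod_pow, Cmod_mult, Cmod_Ci, Cmod_R, Rabs_pos_eq, !Cmod_expi by lra.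
  rewrite pow1, Rmult_1_r; nra.
Qed.

Lemma DerCn_H_sub_approx_le t k x :
  Cmod (DerCn k (H t) x - H_approx t k x)
  <= ((1 + / 1024) ^ k - 1) + ((2 + / 1024) ^ k - 2 ^ k).
Proof.
  set (K := sqrt (2 ^ S t)); set (N := 2 ^ t); set (th := x / Tc t).
  set (p := fst (rs_terms t)); set (q := snd (rs_terms t)).
  assert (HdN : / Tc t * N = / 1024).
  { unfold Tc, N; rewrite pow_add; field; apply pow_nonzero; lra. }
  assert (Hd : 0 <= / Tc t) by (apply Rlt_le, Rinv_0_lt_compat, pow_lt; lra).
  assert (Hp := expsum_affine_pow_sub_le 1 (/ Tc t) k p th K N ltac:(lra) Hd
                 (fun j => Rle_trans _ _ _ (Cmod_le_pair_norm_l _ _) (rs_moment_bound t j th))).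
  assert (Hq := expsum_affine_pow_sub_le 2 (/ Tc t) k q th K N ltac:(lra) Hd
                 (fun j => Rle_trans _ _ _ (Cmod_le_pair_norm_r _ _) (rs_moment_bound t j th))).
  rewrite HdN, pow1 in Hp; rewrite HdN in Hq.
  rewrite DerCn_H; unfold H_approx; rewrite alpha_moment, beta_moment; fold th p q.
  match goal with |- Cmod ?z <= _ =>
    replace z with (Ci ^ k * rs_normalizer t
      * (expi x * (expsum (fun w => RtoC ((1 + / Tc t * w) ^ k)) p th
                   - RtoC 1 * moment 0 p th)
         + expi (2 * x) * (expsum (fun w => RtoC ((2 + / Tc t * w) ^ k)) q th
                   - RtoC (2 ^ k) * moment 0 q th)))%C
  end.
  2: { rewrite Cpow_mult_l, !RtoC_pow; ring. }
  rewrite Cmod_mult, Cmod_mult, Cmod_pow, Cmod_Ci, pow1, Cmod_R, Rabs_pos_eq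
    by apply Rlt_le, rs_normalizer_pos.
  eapply Rle_trans.
  { apply Rmult_le_compat_l; [pose proof (rs_normalizer_pos t); lra|].
    eapply Rle_trans; [apply Cmod_triangle|].
    rewrite !Cmod_mult, !Cmod_expi, !Rmult_1_l.
    apply Rplus_le_compat; [exact Hp|exact Hq]. }
  rewrite <- Rmult_plus_distr_l, <- Rmult_assoc, Rmult_1_l.
  unfold K; rewrite rs_normalizer_mul_sqrt; lra.
Qed.

Lemma remainder_le_eighth k :
  (k <= 4)%nat -> ((1 + / 1024) ^ k - 1) + ((2 + / 1024) ^ k - 2 ^ k) <= 1 / 8.
Proof. intro Hk; destruct k as [|[|[|[|[|k]]]]]; [..|lia]; simpl; lra. Qed.

Theorem lemma3p7 (t : nat) (ht : Nat.odd t = true) :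
  (* H is 4 times differentiable (as an R -> C function), so that the
     componentwise derivatives DerCn k (H t) are genuine derivatives *)
  (forall (k : nat) (x : R), (k < 4)%nat ->
     @is_derive R_AbsRing C_R_NormedModule (DerCn k (H t)) x (DerCn (S k) (H t) x)) /\
  (forall (k : nat) (x : R), (k <= 4)%nat ->
     Cmod (Cminus (DerCn k (H t) x)
             (Cplus (Cmult (pow_n Ci k) (Cmult (expi x) (alpha t x)))
                    (Cmult (pow_n (Cmult (RtoC 2) Ci) k)
                           (Cmult (expi (2 * x)) (beta t x))))) <= 1 / 8
     /\ Cmod (DerCn k (H t) x) <= 2 ^ k + 2).
Proof.
  split.
  - intros k x _; rewrite H_expsum; apply is_derive_DerCn_expsum.
  - intros k x Hk; rewrite (pow_n_Cpow Ci), (pow_n_Cpow (RtoC 2 * Ci)).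
    fold (H_approx t k x).
    pose proof (DerCn_H_sub_approx_le t k x) as Herr.
    pose proof (remainder_le_eighth k Hk) as Hsmall.
    pose proof (Cmod_H_approx_le t k x) as Happrox.
    split; [lra|].
    replace (DerCn k (H t) x) with (DerCn k (H t) x - H_approx t k x + H_approx t k x)%C
      by ring.
    eapply Rle_trans; [apply Cmod_triangle|lra].
Qed.
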